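(* The class of PCGs is a strict subset of the intersection of the class of $2$-AND-PCGs and the class of $2$-interval-PCGs; i.e., every PCG is both a $2$-AND-PCG and a $2$-interval-PCG, and there is a graph that is both a $2$-AND-PCG and a $2$-interval-PCG but not a PCG.
   Context: All trees are unrooted with edges weighted by nonnegative reals; $d_T(u,v)$ is the weight of the path between leaves $u,v$ of $T$. A graph $H$ is a PCG if there exist a tree $T$ with leaf set $V(H)$ and an interval $I$ of nonnegative reals such that $\{u,v\}\in E(H)$ iff $d_T(u,v)\in I$. A graph $G$ is a $k$-interval-PCG if there exist a tree $T$ with leaf set $V(G)$ and $k$ pairwise disjoint intervals $I_1,\ldots,I_k$ of nonnegative reals such that $\{u,v\}\in E(G)$ iff $d_T(u,v)\in I_i$ for some $i$. A graph $G=(V,E)$ is a $k$-AND-PCG if there exist $k$ PCGs $G_1,\ldots,G_k$ on vertex set $V$ with $E=\bigcap_i E(G_i)$. *)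

From HB Require Import structures.
From mathcomp Require Import all_boot all_order all_algebra.
From mathcomp Require Import Rstruct.
Set Implicit Arguments. Unset Strict Implicit. Unset Printing Implicit Defensive.
Import Order.TTheory GRing.Theory Num.Theory.
Local Open Scope ring_scope.

Notation R := Rdefinitions.R.

Definition is_graph (V : finType) (E : rel V) : Prop :=
  symmetric E /\ irreflexive E.

Definition has_cycle (N : finType) (e : rel N) : Prop :=
  exists (x : N) (p : seq N),
    (2 <= size p)%N /\ uniq (x :: p) /\ path e x p /\ e (last x p) x.

Definition is_tree (N : finType) (e : rel N) : Prop :=
  (0 < #|N|)%N /\ is_graph e /\ (forall x y : N, connect e x y) /\ ~ has_cycle e.

Definition degree (N : finType) (e : rel N) (x : N) : nat := #|[set y | e x y]|.

Definition is_leaf (N : finType) (e : rel N) (x : N) : bool := (degree e x <= 1)%N.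

Fixpoint pweight (N : Type) (w : N -> N -> R) (x : N) (p : seq N) : R :=
  match p with
  | [::] => 0
  | y :: q => w x y + pweight w y q
  end.

Definition weighted_tree_on (V N : finType) (e : rel N) (w : N -> N -> R)
    (f : V -> N) : Prop :=
  is_tree e /\
  (forall x y, e x y -> 0 <= w x y /\ w x y = w y x) /\
  injective f /\
  (forall x : N, is_leaf e x <-> exists v : V, f v = x).

Definition dist_in (N : finType) (e : rel N) (w : N -> N -> R) (a b : N)
    (I : interval R) : Prop :=
  exists p : seq N,
    [/\ path e a p, last a p = b, uniq (a :: p) & pweight w a p \in I].

Definition nonneg_itv (I : interval R) : Prop := forall x : R, x \in I -> 0 <= x.

Definition PCG (V : finType) (E : rel V) : Prop :=
  is_graph E /\
  exists (N : finType) (e : rel N) (w : N -> N -> R) (f : V -> N) (I : interval R),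
    weighted_tree_on e w f /\ nonneg_itv I /\
    forall u v : V, u != v -> (E u v <-> dist_in e w (f u) (f v) I).

Definition k_interval_PCG (k : nat) (V : finType) (E : rel V) : Prop :=
  is_graph E /\
  exists (N : finType) (e : rel N) (w : N -> N -> R) (f : V -> N)
         (I : 'I_k -> interval R),
    weighted_tree_on e w f /\
    (forall i, nonneg_itv (I i)) /\
    (forall i j : 'I_k, i != j -> forall x : R, ~ (x \in I i /\ x \in I j)) /\
    forall u v : V, u != v ->
      (E u v <-> exists i : 'I_k, dist_in e w (f u) (f v) (I i)).

Definition k_AND_PCG (k : nat) (V : finType) (E : rel V) : Prop :=
  is_graph E /\
  exists Es : 'I_k -> rel V,
    (forall i, PCG (Es i)) /\ forall u v : V, E u v = [forall i, Es i u v].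

From mathcomp Require Import all_boot all_order all_algebra.
From mathcomp Require Import Rstruct lra.
Set Implicit Arguments. Unset Strict Implicit. Unset Printing Implicit Defensive.
Import Order.TTheory GRing.Theory Num.Theory.
Local Open Scope ring_scope.

(* Every PCG is a 2-AND-PCG (intersect it with itself) and a 2-interval-PCG (add
   an empty second interval).
   The separating graph is the complement of two disjoint 4-cycles. With leaf
   weights 1, 1, 4, 4, 2, 2, 3, 3 its edges are the pairs whose weights do not sum
   to 5, so a star with the intervals [0, 5[ and ]5, +oo[ realizes it, and so does
   the intersection of two suitable stars with the window [2, 6].
   It is not a PCG. Leaf distances d of a weighted tree satisfy the four-point
   condition: none of d(a,b) + d(c,x), d(a,c) + d(b,x), d(a,x) + d(b,c) exceeds
   both others (project c and x onto the path from a to b). If an interval I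
   realized the graph, edges would have their distance in I and each of the eight
   non-edges a distance below or above I, so distances increase strictly along the
   levels below < inside < above. For each of the 2^8 placements of the non-edges a
   finite check finds four leaves and a pairing of them whose pairs have strictly
   higher levels than those of either other pairing, against the four-point
   condition. *)

Section SeqFacts.
Variable T : eqType.

Lemma split_first_hit (s : pred T) x r : s (last x r) ->
  exists r1 r2, [/\ r = r1 ++ r2, s (last x r1) & all (predC s) (belast x r1)].
Proof.
elim: r x => [|z r IH] x /= sr; first by exists [::], [::].
case sx: (s x); first by exists [::], (z :: r); rewrite /= sx.
have [r1 [r2 [-> s1 s2]]] := IH z sr.
by exists (z :: r1), r2; rewrite /= sx s2.
Qed.

Lemma uniq_catl_cons (a : T) p1 p2 : uniq (a :: p1 ++ p2) -> uniq (a :: p1).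
Proof. by rewrite -cat_cons cat_uniq => /andP[]. Qed.

Lemma uniq_catr_last (a : T) p1 p2 :
  uniq (a :: p1 ++ p2) -> uniq (last a p1 :: p2).
Proof. by rewrite -cat_cons lastI cat_rcons cat_uniq => /and3P[]. Qed.

Lemma last_rev_belast (x : T) s : last (last x s) (rev (belast x s)) = x.
Proof. by rewrite -(last_cons x) -rev_rcons -lastI rev_cons last_rcons. Qed.

Lemma cat_eq_cat (p1 p2 q1 q2 : seq T) : p1 ++ p2 = q1 ++ q2 ->
  (exists m, q1 = p1 ++ m /\ p2 = m ++ q2) \/
  (exists m, p1 = q1 ++ m /\ q2 = m ++ p2).
Proof.
elim: p1 q1 => [|z p1 IH] [|t q1] /=.
- by move=> ->; left; exists [::].
- by move=> ->; left; exists (t :: q1).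
- by move=> <-; right; exists (z :: p1).
by case=> -> /IH [[m [-> ->]]|[m [-> ->]]]; [left|right]; exists m.
Qed.

End SeqFacts.

(** * Distances in a weighted tree *)

Section TreeMetric.
Variables (N : finType) (e : rel N) (w : N -> N -> R).
Hypothesis e_sym : symmetric e.
Hypothesis e_connected : forall x y, connect e x y.
Hypothesis e_acyclic : ~ has_cycle e.
Hypothesis w_ge0 : forall x y, e x y -> 0 <= w x y.
Hypothesis w_sym : forall x y, e x y -> w x y = w y x.

Definition spath a b p := [&& path e a p, last a p == b & uniq (a :: p)].

Lemma spath_exists a b : exists p, spath a b p.
Proof.
have /connectP[p ep ->] := e_connected a b.
by have [q eq_ uq _] := shortenP ep; exists q; rewrite /spath eq_ eqxx uq.
Qed.

Lemma spath_cat a b p1 p2 : spath a b (p1 ++ p2) ->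
  spath a (last a p1) p1 /\ spath (last a p1) b p2.
Proof.
case/and3P=> /[!cat_path] /andP[ep1 ep2] /[!last_cat] lb u.
by rewrite /spath ep1 ep2 lb eqxx (uniq_catl_cons u) (uniq_catr_last u).
Qed.

Lemma spath_join x y b r p : spath x y r -> spath y b p ->
  all (fun u => u \notin p) (belast x r) -> spath x b (r ++ p).
Proof.
case/and3P=> er /eqP ly ur /and3P[ep lb up] hr.
apply/and3P; split; first by rewrite cat_path er ly ep.
  by rewrite last_cat ly.
rewrite -cat_cons (lastI x r) ly cat_rcons cat_uniq up andbT.
move: ur; rewrite (lastI x r) ly rcons_uniq => /andP[yr ->] /=.
rewrite negb_or yr; apply/hasPn => u pu.
by apply/negP => /(allP hr); rewrite pu.
Qed.

Lemma path_rev a p : path e a p -> path e (last a p) (rev (belast a p)).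
Proof. by rewrite rev_path (@eq_path _ _ e) // => u v; rewrite /= e_sym. Qed.

Lemma spaths_cycle a y p q : spath a y p -> spath a y (rcons q y) ->
  all (fun u => u \notin p) q -> p != rcons q y -> has_cycle e.
Proof.
case/and3P=> ep /eqP ly /[!cons_uniq] /andP[ap up] /and3P[eqr _].
rewrite cons_uniq rcons_uniq mem_rcons in_cons negb_or => /and3P[/andP[ay aq] _ uq].
move=> qp pq.
have rq : path e y (rcons (rev q) a).
  by have := path_rev eqr; rewrite last_rcons belast_rcons rev_cons.
exists a, (p ++ rev q); split; [|split; [|split]].
- rewrite size_cat size_rev; case: p ly pq {ep ap up qp} => [|z [|z' p]] //= ly.
    by rewrite ly eqxx in ay.
  by rewrite ly; case: q {eqr aq uq rq} => // /[!eqxx].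
- rewrite cons_uniq mem_cat negb_or ap mem_rev aq cat_uniq up rev_uniq uq /= andbT.
  by apply/hasPn => u; rewrite mem_rev => /(allP qp).
- by rewrite cat_path ep ly; move: rq; rewrite rcons_path => /andP[].
- by rewrite last_cat ly; move: rq; rewrite rcons_path => /andP[].
Qed.

Lemma spath_unique a b p q : spath a b p -> spath a b q -> p = q.
Proof.
elim: p a q => [|z p IH] a [|z' q] //.
- case/and3P=> _ /eqP <- _ /and3P[_ /eqP /= lq /andP[aq _]].
  by rewrite -{1}lq mem_last in aq.
- case/and3P=> _ /eqP /= lp /andP[ap _] /and3P[_ /eqP /= ab _].
  by rewrite ab -lp mem_last in ap.
move=> hp; case: (eqVneq z z') => [<-|zz'] hq.
  have [_ {}hp] := spath_cat (p1 := [:: z]) hp.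
  have [_ {}hq] := spath_cat (p1 := [:: z]) hq.
  by rewrite (IH z q hp hq).
exfalso; apply: e_acyclic.
have bq : last z p \in z' :: q.
  by case/and3P: hp hq => _ /eqP /= -> _ /and3P[_ /eqP /= <- _]; apply: mem_last.
have [r1 [r2 [epr yq hr1]]] := split_first_hit (s := mem (z' :: q)) bq.
set y := last z r1 in yq hr1.
have [q1 [q2 eqq]] : exists q1 q2, z' :: q = q1 ++ y :: q2.
  by case/splitPr: yq => q1 q2; exists q1, q2.
rewrite eqq -cat_rcons in hq.
rewrite epr in hp; have [hpy _] := spath_cat (p1 := z :: r1) hp.
have [hqy _] := spath_cat hq; rewrite last_rcons in hqy.
apply: (spaths_cycle hpy hqy).
- apply/allP => u uq1; rewrite (lastI z r1) mem_rcons in_cons negb_or.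
  apply/andP; split.
    apply: contraTneq uq1 => ->.
    by case/and3P: hqy => _ _ /[!cons_uniq] /andP[_]; rewrite rcons_uniq => /andP[].
  by apply/negP => /(allP hr1); rewrite /= eqq mem_cat uq1.
- apply: contra_neq zz' => /(congr1 (head a)) /= ->.
  by move/(congr1 (head a)): eqq => /= ->; case: q1 {hq hqy}.
Qed.

Lemma pweight_cat a p1 p2 :
  pweight w a (p1 ++ p2) = pweight w a p1 + pweight w (last a p1) p2.
Proof. by elim: p1 a => [|z p1 IH] a /=; rewrite ?add0r // IH addrA. Qed.

Lemma pweight_ge0 a p : path e a p -> 0 <= pweight w a p.
Proof. by elim: p a => [|z p IH] a //= /andP[az zp]; rewrite addr_ge0 ?w_ge0 ?IH. Qed.

Lemma pweight_rev a p : path e a p ->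
  pweight w (last a p) (rev (belast a p)) = pweight w a p.
Proof.
elim: p a => [|z p IH] a //= /andP[az zp].
by rewrite rev_cons -cats1 pweight_cat IH //= addr0 last_rev_belast addrC (w_sym az).
Qed.

Lemma spath_rev a b p : spath a b p -> spath b a (rev (belast a p)).
Proof.
case/and3P=> ep /eqP <- up; apply/and3P; split.
- exact: path_rev.
- by rewrite last_rev_belast.
- by rewrite -rev_rcons -lastI rev_uniq.
Qed.

Definition tdist a b := pweight w a (xchoose (spath_exists a b)).

Lemma tdist_spath a b p : spath a b p -> tdist a b = pweight w a p.
Proof. by move=> h; rewrite /tdist (spath_unique (xchooseP (spath_exists a b)) h). Qed.

Lemma tdist_ge0 a b : 0 <= tdist a b.
Proof. by apply: pweight_ge0; case/and3P: (xchooseP (spath_exists a b)). Qed.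

Lemma tdist_sym a b : tdist a b = tdist b a.
Proof.
have [p hp] := spath_exists a b.
rewrite (tdist_spath hp) (tdist_spath (spath_rev hp)).
by case/and3P: hp => ep /eqP <- _; rewrite pweight_rev.
Qed.

Lemma tdist_cat a b p1 p2 : spath a b (p1 ++ p2) ->
  tdist a b = tdist a (last a p1) + tdist (last a p1) b.
Proof.
move=> h; have [h1 h2] := spath_cat h.
by rewrite (tdist_spath h) (tdist_spath h1) (tdist_spath h2) pweight_cat.
Qed.

Lemma tdist_proj x a b p : spath a b p -> exists p1 p2, let y := last a p1 in
  [/\ p = p1 ++ p2, tdist x a = tdist x y + tdist y a
    & tdist x b = tdist x y + tdist y b].
Proof.
move=> hp; have [r hr] := spath_exists x a.
have ra : last x r \in a :: p by case/and3P: hr => _ /eqP -> _; apply: mem_head.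
have [r1 [r2 [er yp hr1]]] := split_first_hit (s := fun u => u \in a :: p) ra.
rewrite {r ra}er in hr.
case/splitPl: yp hp hr1 => p1 p2 ly hp hr1; exists p1, p2; rewrite /= ly.
split=> //; first exact: tdist_cat hr.
have [hr1y _] := spath_cat hr; have [_ hyb] := spath_cat hp; rewrite ly in hyb.
apply: tdist_cat; apply: spath_join hr1y hyb _.
apply/allP => u /(allP hr1); apply: contra => up2.
by rewrite /= in_cons mem_cat up2 !orbT.
Qed.

Lemma tdist_triangle a b x : tdist a b <= tdist a x + tdist x b.
Proof.
have [p hp] := spath_exists a b.
have [p1 [p2 [ep hxa hxb]]] := tdist_proj x hp; rewrite ep in hp.
rewrite (tdist_cat hp) (tdist_sym a x) hxa hxb (tdist_sym _ a).
by have := tdist_ge0 x (last a p1); lra.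
Qed.

(* [yc] and [yd] are the projections of [c] and [d] on the path from [a] to [b],
   [yc] coming first. *)
Lemma tdist_four_point_ordered a b c d p1 m p2 :
  let yc := last a p1 in let yd := last yc m in
  spath a b (p1 ++ m ++ p2) ->
  tdist c b = tdist c yc + tdist yc b -> tdist d a = tdist d yd + tdist yd a ->
  tdist a b + tdist c d <= tdist a d + tdist b c.
Proof.
move=> yc yd hp hcb hda.
have [_ hyb] := spath_cat hp.
have hay : spath a yd (p1 ++ m).
  have hp' : spath a b ((p1 ++ m) ++ p2) by rewrite -catA.
  by have [+ _] := spath_cat hp'; rewrite last_cat.
rewrite (tdist_cat hp) (tdist_cat hyb) (tdist_sym a d) hda (tdist_sym yd a).
rewrite (tdist_cat hay).
rewrite (tdist_sym b c) hcb (tdist_cat hyb).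
have := tdist_triangle c d yc; have := tdist_triangle yc d yd.
rewrite (tdist_sym yd d); lra.
Qed.

Lemma tdist_four_point a b c d :
  tdist a b + tdist c d <= Num.max (tdist a c + tdist b d) (tdist a d + tdist b c).
Proof.
have [p hp] := spath_exists a b.
have [p1 [p2 [ep hca hcb]]] := tdist_proj c hp.
have [q1 [q2 [eq_ hda hdb]]] := tdist_proj d hp.
rewrite le_max; case: (cat_eq_cat (etrans (esym ep) eq_)) => [[m [e1 e2]]|[m [e1 e2]]].
  rewrite e1 last_cat in hda; rewrite ep e2 in hp.
  by rewrite (tdist_four_point_ordered hp hcb hda) orbT.
rewrite e1 last_cat in hca; rewrite eq_ e2 in hp.
by rewrite (tdist_sym c d) (tdist_four_point_ordered hp hdb hca).
Qed.

Lemma dist_inE a b I : dist_in e w a b I <-> tdist a b \in I.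
Proof.
split=> [[p [ep /eqP lp up]]|]; first by rewrite (@tdist_spath a b p) // /spath ep lp up.
have /and3P[ep /eqP lp up] := xchooseP (spath_exists a b).
by exists (xchoose (spath_exists a b)).
Qed.

End TreeMetric.

Lemma PCG_four_point (V : finType) (E : rel V) : PCG E ->
  exists (d : V -> V -> R) (I : interval R),
    [/\ forall u v, d u v = d v u,
        forall a b c x, d a b + d c x <= Num.max (d a c + d b x) (d a x + d b c)
      & forall u v, u != v -> (E u v <-> d u v \in I)].
Proof.
case=> _ [N [e [w [f [I [[[_ [[e_sym _] [e_con e_acyc]]] [hw _]] [_ hE]]]]]]].
have w_sym x y : e x y -> w x y = w y x by case/hw.
have w_ge0 x y : e x y -> 0 <= w x y by case/hw.
exists (fun u v => tdist w e_con (f u) (f v)), I; split=> [u v|a b c x|u v uv].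
- exact: (tdist_sym e_sym e_con e_acyc w_sym).
- exact: (tdist_four_point e_sym e_con e_acyc w_ge0 w_sym).
- by rewrite hE // (dist_inE w e_sym e_con e_acyc).
Qed.

Lemma forall_ord2 (P : pred 'I_2) : [forall i, P i] = P ord0 && P ord_max.
Proof.
apply/forallP/andP => [h|[h0 h1] [[|[|//]] i]]; first by split; apply: h.
  by rewrite (_ : Ordinal i = ord0) //; apply: val_inj.
by rewrite (_ : Ordinal i = ord_max) //; apply: val_inj.
Qed.

Lemma two_AND_PCG_intro (V : finType) (E E1 E2 : rel V) :
  is_graph E -> PCG E1 -> PCG E2 -> (forall u v, E u v = E1 u v && E2 u v) ->
  k_AND_PCG 2 E.
Proof.
move=> gE h1 h2 hE; split=> //; exists (fun i => if i == ord0 then E1 else E2).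
by split=> [i|u v]; [case: ifP | rewrite forall_ord2 hE].
Qed.

Lemma two_interval_PCG_intro (V N : finType) (E : rel V) (e : rel N) w f
    (I J : interval R) :
  is_graph E -> weighted_tree_on e w f -> nonneg_itv I -> nonneg_itv J ->
  (forall x, x \in I -> x \notin J) ->
  (forall u v, u != v ->
     (E u v <-> dist_in e w (f u) (f v) I \/ dist_in e w (f u) (f v) J)) ->
  k_interval_PCG 2 E.
Proof.
move=> gE tree I0 J0 IJ hE; split=> //.
exists N, e, w, f, (fun i => if i == ord0 then I else J); split=> //.
split; first by move=> i; case: ifP.
split.
  move=> [[|[|//]] i] [[|[|//]] j] //= _ x [].
    by move=> /IJ /negP.
  by move=> + /IJ /negP.
move=> u v /hE ->; split=> [[h|h]|[[[|[|//]] i] h]].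
- by exists ord0.
- by exists ord_max.
- by left.
- by right.
Qed.

Lemma PCG_two_AND_PCG (V : finType) (E : rel V) : PCG E -> k_AND_PCG 2 E.
Proof.
by move=> hE; apply: (two_AND_PCG_intro _ hE hE) => [|u v]; [case: hE | rewrite andbb].
Qed.

Lemma PCG_two_interval_PCG (V : finType) (E : rel V) : PCG E -> k_interval_PCG 2 E.
Proof.
case=> gE [N [e [w [f [I [tree [I0 hE]]]]]]].
apply: (two_interval_PCG_intro (J := `]0, 0[) gE tree I0) => [x|x _|u v /hE ->].
- by rewrite in_itv /= => /andP[/ltW].
- by rewrite in_itv /= lt_asym.
split=> [|[//|[p [_ _ _]]]]; first by left.
by rewrite in_itv /= lt_asym.
Qed.

(** * Stars *)

Section Star.
Variables (n : nat) (lw : 'I_n -> R).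
Hypothesis n_gt1 : (1 < n)%N.
Hypothesis lw_ge0 : forall u, 0 <= lw u.

Definition star_edge : rel (option 'I_n) := fun x y => (x == None) != (y == None).

Definition star_weight (x y : option 'I_n) : R :=
  match x, y with Some u, None | None, Some u => lw u | _, _ => 0 end.

Lemma star_edge_sym : symmetric star_edge.
Proof. by move=> x y; rewrite /star_edge eq_sym. Qed.

Lemma star_connected x y : connect star_edge x y.
Proof.
have toNone z : connect star_edge z None.
  by case: z => [u|]; [apply: connect1 | apply: connect0].
by apply: connect_trans (toNone x) _; rewrite sym_connect_sym //; exact: star_edge_sym.
Qed.

Lemma star_acyclic : ~ has_cycle star_edge.
Proof.
case=> x [[|y1 [|y2 p]] [//= _ [/and3P[+ + _] [/and3P[+ + +] +]]]].
by case: x y1 y2 p => [?|] [?|] [?|] [|[?|] ?].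
Qed.

Lemma star_tree : weighted_tree_on star_edge star_weight Some.
Proof.
split.
  split; first by rewrite card_option.
  split; first by split; [exact: star_edge_sym | case].
  by split; [exact: star_connected | exact: star_acyclic].
split; first by case=> [u|] [v|] //= _; rewrite lw_ge0.
split; first by move=> u v [].
move=> x; rewrite /is_leaf /degree; split.
  case: x => [u|]; first by exists u.
  have -> : [set y | star_edge None y] = [set~ None].
    by apply/setP => -[y|]; rewrite !inE.
  by rewrite cardsC1 card_option /= card_ord leqNgt n_gt1.
case=> u <-.
have -> : [set y | star_edge (Some u) y] = [set None].
  by apply/setP => -[y|]; rewrite !inE.
by rewrite cards1.
Qed.

Lemma star_dist_in (I : interval R) (u v : 'I_n) : u != v ->
  dist_in star_edge star_weight (Some u) (Some v) I <-> lw u + lw v \in I.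
Proof.
move=> uv; rewrite (dist_inE _ star_edge_sym star_connected star_acyclic).
have uv_path : spath star_edge (Some u) (Some v) [:: None; Some v].
  by rewrite /spath /= !inE eqxx /= andbT; apply: contra uv => /eqP [->].
by rewrite (tdist_spath _ star_edge_sym star_connected star_acyclic uv_path) /= addr0.
Qed.

End Star.

Definition sum_graph (T : eqType) (s : T -> nat) (P : pred nat) : rel T :=
  fun u v => (u != v) && P (s u + s v)%N.

Lemma sum_graph_is_graph (T : finType) (s : T -> nat) P : is_graph (sum_graph s P).
Proof. by split=> [u v|u]; rewrite /sum_graph ?eqxx // eq_sym addnC. Qed.

Lemma sum_window_PCG n (s : 'I_n -> nat) (lo hi : nat) : (1 < n)%N ->
  PCG (sum_graph s [pred t | lo <= t <= hi]%N).
Proof.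
move=> n_gt1; split; first exact: sum_graph_is_graph.
exists (option 'I_n), (@star_edge n), (star_weight (fun u => (s u)%:R)), Some.
exists `[lo%:R, hi%:R].
split; first by apply: star_tree.
split; first by move=> x; rewrite in_itv /= => /andP[/(le_trans (ler0n _ _))].
by move=> u v uv; rewrite star_dist_in // in_itv /= -natrD !ler_nat /sum_graph uv.
Qed.

Lemma sum_avoid_two_interval_PCG n (s : 'I_n -> nat) (k : nat) : (1 < n)%N ->
  k_interval_PCG 2 (sum_graph s (predC1 k)).
Proof.
move=> n_gt1.
have tree := star_tree n_gt1 (fun u => ler0n _ (s u)).
apply: (two_interval_PCG_intro (I := `[0, k%:R[) (J := `]k%:R, +oo[)
  (sum_graph_is_graph _ _) tree).
- by move=> x; rewrite in_itv /= => /andP[].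
- by move=> x; rewrite in_itv /= andbT => /ltW; apply: le_trans.
- by move=> x; rewrite !in_itv /= andbT => /andP[_ xk]; rewrite -leNgt ltW.
move=> u v uv; rewrite !star_dist_in // !in_itv /= andbT -natrD ler0n !ltr_nat.
by rewrite /sum_graph uv /= neq_ltn; split=> /orP.
Qed.

(** * Four-point violations forced by levels *)

Section Dominance.
Variables (T : eqType) (A : pred T) (lv : T -> T -> nat).

Definition dominates (P Q : (T * T) * (T * T)) : bool :=
  let lt p q := (lv p.1 p.2 < lv q.1 q.2)%N in
  (lt Q.1 P.1 && lt Q.2 P.2) || (lt Q.2 P.1 && lt Q.1 P.2).

Definition dominant a b c x : bool :=
  dominates ((a, b), (c, x)) ((a, c), (b, x)) &&
  dominates ((a, b), (c, x)) ((a, x), (b, c)).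

Definition four_point_violation a b c x : bool :=
  [&& all A [:: a; b; c; x], uniq [:: a; b; c; x]
    & [|| dominant a b c x, dominant a c b x | dominant a x b c]].

Definition proper_pair u v := [&& A u, A v & u != v].

Variable d : T -> T -> R.
Hypothesis d_four_point : forall a b c x,
  d a b + d c x <= Num.max (d a c + d b x) (d a x + d b c).
Hypothesis lv_mono : forall u v y z,
  proper_pair u v -> proper_pair y z -> (lv u v < lv y z)%N -> d u v < d y z.

Lemma dominates_lt a b c x a' b' c' x' :
  proper_pair a b -> proper_pair c x -> proper_pair a' b' -> proper_pair c' x' ->
  dominates ((a, b), (c, x)) ((a', b'), (c', x')) -> d a' b' + d c' x' < d a b + d c x.
Proof.
move=> ab cx ab' cx' /orP[/andP[h1 h2]|/andP[h1 h2]].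
  by have := lv_mono ab' ab h1; have := lv_mono cx' cx h2; lra.
by have := lv_mono cx' ab h1; have := lv_mono ab' cx h2; lra.
Qed.

Lemma not_dominant a b c x :
  all A [:: a; b; c; x] -> uniq [:: a; b; c; x] -> ~~ dominant a b c x.
Proof.
rewrite /= !inE !negb_or !andbT => /and4P[Aa Ab Ac Ax].
move=> /and3P[/and3P[ab ac ax] /andP[bc bx] cx].
have pp u v : A u -> A v -> u != v -> proper_pair u v by move=> *; apply/and3P.
have pab := pp _ _ Aa Ab ab; have pcx := pp _ _ Ac Ax cx.
have pac := pp _ _ Aa Ac ac; have pbx := pp _ _ Ab Ax bx.
have pax := pp _ _ Aa Ax ax; have pbc := pp _ _ Ab Ac bc.
apply/andP=> -[h1 h2].
have := dominates_lt pab pcx pac pbx h1; have := dominates_lt pab pcx pax pbc h2.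
by have := d_four_point a b c x; rewrite le_max => /orP[]; lra.
Qed.

Lemma no_four_point_violation a b c x : ~~ four_point_violation a b c x.
Proof.
apply/and3P=> -[hA hu]; apply/negP.
have perm_acbx : perm_eq [:: a; c; b; x] [:: a; b; c; x].
  by rewrite perm_cons (perm_catCA [:: c] [:: b]).
have perm_axbc : perm_eq [:: a; x; b; c] [:: a; b; c; x].
  by rewrite perm_cons (perm_catC [:: x]).
rewrite !negb_or !not_dominant ?(perm_uniq perm_acbx) ?(perm_uniq perm_axbc) //.
- by rewrite (perm_all _ perm_axbc).
- by rewrite (perm_all _ perm_acbx).
Qed.
End Dominance.

(** * The complement of two disjoint 4-cycles *)

(* The two 4-cycles of non-edges live on {0, 1, 2, 3} and {4, 5, 6, 7}; they are
   exactly the pairs of weight sum 5. *)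
Definition co2C4_weight (u : nat) : nat := nth 0 [:: 1; 1; 4; 4; 2; 2; 3; 3]%N u.

(* The same graph on [nat], where the finite checks below are computed. *)
Definition co2C4_nat : rel nat := sum_graph co2C4_weight (predC1 5%N).

Definition co2C4 : rel 'I_8 := sum_graph (fun u : 'I_8 => co2C4_weight u) (predC1 5%N).

Definition co2C4_nonedges : seq (nat * nat) :=
  [:: (0, 2); (0, 3); (1, 2); (1, 3); (4, 6); (4, 7); (5, 6); (5, 7)]%N.

Lemma co2C4_nonedgesP : all (fun u => all (fun v =>
  (u != v) && ~~ co2C4_nat u v ==> ((minn u v, maxn u v) \in co2C4_nonedges))
  (iota 0 8)) (iota 0 8).
Proof. by vm_compute. Qed.

Definition co2C4_level (below : seq bool) (u v : nat) : nat :=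
  if co2C4_nat u v then 1
  else if nth false below (index (minn u v, maxn u v) co2C4_nonedges) then 0 else 2.

Fixpoint bool_seqs (n : nat) : seq (seq bool) :=
  if n is n'.+1 then [seq b :: s | b <- [:: true; false], s <- bool_seqs n']
  else [:: [::]].

Lemma mem_bool_seqs n (s : seq bool) : size s = n -> s \in bool_seqs n.
Proof.
elim: n s => [|n IH] [|b s] // [/IH sn]; apply/allpairsP; exists (b, s).
by case: b.
Qed.

Definition sorted_quads : seq (nat * nat * nat * nat) :=
  let pairs := [seq (a, b) | a <- iota 0 8, b <- iota 0 8] in
  [seq q <- [seq (p.1, p.2, p'.1, p'.2) | p <- pairs, p' <- pairs] |
    (q.1.1.1 < q.1.1.2 < q.1.2)%N && (q.1.2 < q.2)%N].

Lemma co2C4_violations : all (fun below => has (fun '(a, b, c, x) =>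
  four_point_violation (fun u => u < 8)%N (co2C4_level below) a b c x) sorted_quads)
  (bool_seqs 8).
Proof. by vm_compute. Qed.

Lemma mem_itv_between (I : interval R) (x y z : R) :
  x \in I -> z \in I -> x <= y <= z -> y \in I.
Proof.
case: I => l u; rewrite !itv_boundlr => /andP[lx _] /andP[_ zu] /andP[xy yz].
by rewrite (le_trans lx) ?(le_trans _ zu) // leBSide /= ?xy ?yz.
Qed.

Section Co2C4Realization.
Variables (d : nat -> nat -> R) (I : interval R).
Hypothesis d_sym : forall u v, d u v = d v u.
Hypothesis d_four_point : forall a b c x,
  d a b + d c x <= Num.max (d a c + d b x) (d a x + d b c).
Hypothesis d_edge : forall u v, (u < 8)%N -> (v < 8)%N -> u != v ->
  co2C4_nat u v = (d u v \in I).

Let m0 := d 0 7.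
Let below := [seq d p.1 p.2 < m0 | p <- co2C4_nonedges].

Lemma m0_in_I : m0 \in I.
Proof. by rewrite -d_edge. Qed.

Lemma co2C4_levelE u v : (u < 8)%N -> (v < 8)%N -> u != v ->
  co2C4_level below u v = if co2C4_nat u v then 1%N else if d u v < m0 then 0%N else 2%N.
Proof.
move=> u8 v8 uv; rewrite /co2C4_level; case: ifP => // nuv.
have uvE : (minn u v, maxn u v) \in co2C4_nonedges.
  by have := allP (allP co2C4_nonedgesP u _) v; rewrite !mem_iota /= u8 v8 uv nuv; apply.
rewrite (nth_map (0, 0)%N) ?index_mem // nth_index //=.
by case: (leqP u v) => _; last rewrite d_sym.
Qed.

Lemma co2C4_level_mono u v y z :
  proper_pair (fun u => u < 8)%N u v -> proper_pair (fun u => u < 8)%N y z ->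
  (co2C4_level below u v < co2C4_level below y z)%N -> d u v < d y z.
Proof.
case/and3P=> u8 v8 uv /and3P[y8 z8 yz].
rewrite !co2C4_levelE // (d_edge u8 v8 uv) (d_edge y8 z8 yz).
case Iuv: (d u v \in I); case Iyz: (d y z \in I) => //=.
- case: ltP => // m0_yz _; rewrite ltNge; apply/negP => yz_uv.
  suff : d y z \in I by rewrite Iyz.
  by apply: (mem_itv_between m0_in_I Iuv); rewrite m0_yz.
- case: ltP => // uv_m0 _; rewrite ltNge; apply/negP => yz_uv.
  suff : d u v \in I by rewrite Iuv.
  by apply: (mem_itv_between Iyz m0_in_I); rewrite yz_uv ltW.
- by case: ltP => uv_m0; case: ltP => // m0_yz _; apply: lt_le_trans m0_yz.
Qed.

Lemma co2C4_unrealizable : False.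
Proof.
have /hasP[[[[a b] c] x] _] := allP co2C4_violations below (mem_bool_seqs (size_map _ _)).
by apply/negP; apply: no_four_point_violation d_four_point co2C4_level_mono a b c x.
Qed.

End Co2C4Realization.

Lemma co2C4_inord u v : (u < 8)%N -> (v < 8)%N ->
  co2C4 (inord u) (inord v) = co2C4_nat u v.
Proof. by move=> u8 v8; rewrite /co2C4 /sum_graph -val_eqE /= !inordK. Qed.

Lemma co2C4_not_PCG : ~ PCG co2C4.
Proof.
case/PCG_four_point=> d [I [d_sym d_four_point d_edge]].
apply: (@co2C4_unrealizable (fun u v => d (inord u) (inord v)) I) => // u v u8 v8 uv.
have iuv : (inord u : 'I_8) != inord v by rewrite -val_eqE /= !inordK.
by rewrite -co2C4_inord //; apply/idP/idP => /(d_edge _ _ iuv).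
Qed.

(* Both stars use the window [2, 6]: the first cuts the non-edges at 0 and 5,
   the second those at 1 and 4. *)
Definition co2C4_weight1 (u : nat) : nat := nth 0 [:: 0; 2; 1; 1; 2; 4; 3; 3]%N u.
Definition co2C4_weight2 (u : nat) : nat := nth 0 [:: 2; 4; 3; 3; 0; 2; 1; 1]%N u.

Lemma co2C4_meet : all (fun u => all (fun v => co2C4_nat u v ==
  sum_graph co2C4_weight1 [pred t | 2 <= t <= 6]%N u v &&
  sum_graph co2C4_weight2 [pred t | 2 <= t <= 6]%N u v) (iota 0 8)) (iota 0 8).
Proof. by vm_compute. Qed.

Lemma co2C4_two_AND_PCG : k_AND_PCG 2 co2C4.
Proof.
apply: (two_AND_PCG_intro (sum_graph_is_graph _ _)
  (sum_window_PCG (fun u : 'I_8 => co2C4_weight1 u) 2 6 isT)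
  (sum_window_PCG (fun u : 'I_8 => co2C4_weight2 u) 2 6 isT)) => u v.
have in8 (w : 'I_8) : val w \in iota 0 8 by rewrite mem_iota ltn_ord.
have /eqP := allP (allP co2C4_meet _ (in8 u)) _ (in8 v).
by rewrite /co2C4_nat /co2C4 /sum_graph -(inj_eq val_inj).
Qed.

Lemma co2C4_two_interval_PCG : k_interval_PCG 2 co2C4.
Proof. exact: sum_avoid_two_interval_PCG. Qed.

Theorem theorem10 :
  (forall (V : finType) (E : rel V),
      PCG E -> k_AND_PCG 2 E /\ k_interval_PCG 2 E) /\
  (exists (V : finType) (E : rel V),
      [/\ k_AND_PCG 2 E, k_interval_PCG 2 E & ~ PCG E]).
Proof.
split=> [V E hE|]; first by split; [exact: PCG_two_AND_PCG | exact: PCG_two_interval_PCG].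
by exists 'I_8, co2C4; split; [exact: co2C4_two_AND_PCG | exact: co2C4_two_interval_PCG
  | exact: co2C4_not_PCG].
Qed.
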